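(* Let $C_{\max}(x)\in\arg\max_{C\in\mathcal I}p_C(x)$ (ties broken in favor of the larger weight $w(C)$), and set $D_G(x)=\mathbb 1\{T(x)\ge 1-\alpha\}$ and $C_G(x)=C_{\max}(x)$. Then $(D_G,C_G)$ is a feasible policy (i.e. $mFCR(D_G,C_G)\le\alpha$) that minimizes $G(D,C)$. Moreover, if $\mathbb P(T(X)>1-\alpha)=0$, then $(D_G,C_G)$ is an optimal solution of the problem of maximizing $\Pi(D,C)$ over all $D:\mathcal X\to\{0,1\}$, $C:\mathcal X\to\mathcal I$ subject to $mFCR(D,C)\le\alpha$.
   Context: Let $(X,Y)\sim P_{XY}$ on $\mathcal X\times\mathcal Y$, $\alpha\in(0,1)$, $\mathcal I$ a finite collection of subsets of $\mathcal Y$, $w:\mathcal I\to(0,B)$ a bounded positive weight. For $C\in\mathcal I$ let $p_C(x)=\mathbb P(Y\in C\mid X=x)$ and $T(x)=\max_{C\in\mathcal I}p_C(x)$. For $D:\mathcal X\to\{0,1\}$, $C:\mathcal X\to\mathcal I$: $\Pi(D,C)=\mathbb E[w(C(X))p_{C(X)}(X)D(X)]$, $G(D,C)=\mathbb E[(1-p_{C(X)}(X)-\alpha)D(X)]$, and $mFCR(D,C)=\frac{\mathbb E[\mathbb 1\{Y\notin C(X)\}D(X)]}{\mathbb E[D(X)]}$ with the convention that it is $0$ if $\mathbb E[D(X)]=0$. *)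

From HB Require Import structures.
From mathcomp Require Import all_boot all_order all_algebra.
From mathcomp Require Import all_classical all_reals all_analysis.
Set Implicit Arguments. Unset Strict Implicit. Unset Printing Implicit Defensive.
Import Order.TTheory GRing.Theory Num.Theory.
Local Open Scope classical_set_scope.
Local Open Scope ring_scope.

Section Defs.
Context {d1 d2 d3 : measure_display} {Om : measurableType d1}
  {Xs : measurableType d2} {Ys : measurableType d3} {R : realType}.

Definition expect (P : probability Om R) (f : Om -> R) : R :=
  fine (\int[P]_w (f w)%:E)%E.

(* q is a version of x |-> P(Y in C | X = x), with values in [0,1]:
   measurable, and P(X in A, Y in C) = E[q(X) ; X in A] for all measurable A *)
Definition is_cond_prob (P : probability Om R) (X : Om -> Xs) (Y : Om -> Ys)
  (C : set Ys) (q : Xs -> R) : Prop :=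
  [/\ measurable_fun setT q, (forall x, 0 <= q x <= 1) &
      forall A : set Xs, measurable A ->
        P (X @^-1` A `&` Y @^-1` C) = (\int[P]_(w in X @^-1` A) (q (X w))%:E)%E].

Definition Tmax {I : finType} (p : I -> Xs -> R) (x : Xs) : R :=
  \big[Num.max/0]_(i : I) p i x.

Definition policy {I : finType} (D : Xs -> bool) (C : Xs -> I) : Prop :=
  measurable (D @^-1` [set true]) /\ forall i, measurable (C @^-1` [set i]).

Definition Pi (P : probability Om R) (X : Om -> Xs) {I : finType}
  (w : I -> R) (p : I -> Xs -> R) (D : Xs -> bool) (C : Xs -> I) : R :=
  expect P (fun om => w (C (X om)) * p (C (X om)) (X om) * (D (X om))%:R).

Definition Gobj (P : probability Om R) (X : Om -> Xs) {I : finType}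
  (alpha : R) (p : I -> Xs -> R) (D : Xs -> bool) (C : Xs -> I) : R :=
  expect P (fun om => (1 - p (C (X om)) (X om) - alpha) * (D (X om))%:R).

Definition mFCR (P : probability Om R) (X : Om -> Xs) (Y : Om -> Ys) {I : finType}
  (S : I -> set Ys) (D : Xs -> bool) (C : Xs -> I) : R :=
  let den := expect P (fun om => (D (X om))%:R) in
  if den == 0 then 0
  else expect P (fun om => \1_(~` S (C (X om))) (Y om) * (D (X om))%:R) / den.

End Defs.

(* By the tower property, E[1{Y \notin C(X)} D(X)] = E[(1 - p_C(X)(X)) D(X)], so a
   policy is feasible exactly when G(D, C) <= 0.  The integrand (1 - p_C(x) - alpha) D(x)
   of G is minimised pointwise by selecting C_max(x) and deciding D(x) = 1 exactly when
   1 - T(x) - alpha <= 0; this gives both the minimality of G and, comparing with the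
   policy that never decides, G(D_G, C_G) <= 0, i.e. feasibility.
   If T(X) <= 1 - alpha almost surely, the G-integrand of every policy is a.s.
   nonnegative, so feasibility forces it to vanish a.s.: a feasible policy only decides
   where p_C(X) = T(X) = 1 - alpha, and there D_G decides as well while C_max has
   weight at least w(C). *)

From HB Require Import structures.
From mathcomp Require Import all_boot all_order all_algebra.
From mathcomp Require Import all_classical all_reals all_analysis.
From mathcomp Require Import measurable_realfun lra.
Import Order.TTheory GRing.Theory Num.Theory.
Local Open Scope classical_set_scope.
Local Open Scope ring_scope.

Section expectation.
Context {d} {T : measurableType d} {R : realType} (P : probability T R).
Implicit Types f g : T -> R.

Local Notation integrable f := (P.-integrable setT (EFin \o f)).

Lemma integrable_bounded f M : measurable_fun setT f ->
  (forall x, `|f x| <= M) -> integrable f.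
Proof.
move=> mf fM; apply: measurable_bounded_integrable => //.
  exact: le_lt_trans (probability_le1 P measurableT) (ltry 1).
exists M; split; first exact: num_real.
by move=> y My x _; exact: le_trans (fM x) (ltW My).
Qed.

Lemma measurable_fun_integrable f : integrable f -> measurable_fun setT f.
Proof. by case/integrableP => /measurable_EFinP. Qed.

Lemma expect_ge0 f : (forall x, 0 <= f x) -> 0 <= expect P f.
Proof. by move=> f0; apply: Rintegral_ge0 => x _; exact: f0. Qed.

Lemma le_expect f g : integrable f -> integrable g ->
  (forall x, f x <= g x) -> expect P f <= expect P g.
Proof. by move=> If Ig fg; apply: le_Rintegral => // x _; exact: fg. Qed.

Lemma expectZl r f : integrable f -> expect P (fun x => r * f x) = r * expect P f.
Proof. exact: RintegralZl. Qed.

Lemma expectB f g : integrable f -> integrable g ->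
  expect P (fun x => f x - g x) = expect P f - expect P g.
Proof. exact: RintegralB. Qed.

Lemma expect_sum (I : finType) (F : I -> T -> R) : (forall i, integrable (F i)) ->
  expect P (fun x => \sum_i F i x) = \sum_i expect P (F i).
Proof.
move=> IF; rewrite /expect sum_fine; last first.
  by move=> i _; apply: integrable_fin_num => //; exact: IF.
by under eq_integral do rewrite -sumEFin; rewrite integral_sum.
Qed.

Lemma expect_ae_eq f g : measurable_fun setT f -> measurable_fun setT g ->
  {ae P, forall x, f x = g x} -> expect P f = expect P g.
Proof.
move=> mf mg fg; congr fine; apply: ae_eq_integral => //.
- exact/measurable_EFinP.
- exact/measurable_EFinP.
- by apply: filterS fg => x -> _.
Qed.

Lemma le_expect_ae f g : integrable f -> integrable g ->
  {ae P, forall x, f x <= g x} -> expect P f <= expect P g.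
Proof.
move=> If Ig fg; rewrite -subr_ge0 -expectB //.
have mgf : measurable_fun setT (fun x => g x - f x).
  by apply: measurable_funB; exact: measurable_fun_integrable.
rewrite (@expect_ae_eq _ (fun x => Num.max (g x - f x) 0)) //.
- by apply: expect_ge0 => x; rewrite le_max lexx orbT.
- by apply: measurable_maxr => //; exact: measurable_cst.
- by apply: filterS fg => x fgx; rewrite max_l // subr_ge0.
Qed.

Lemma expect_le0_ae f : integrable f -> {ae P, forall x, 0 <= f x} ->
  expect P f <= 0 -> {ae P, forall x, f x <= 0}.
Proof.
move=> If f0 Ef0; have mf : measurable_fun setT (EFin \o f).
  by case/integrableP: If.
have Eabs : (\int[P]_x `|(f x)%:E| = \int[P]_x (f x)%:E)%E.
  apply: ae_eq_integral => //; first exact: measurableT_comp.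
  by apply: filterS f0 => x fx0 _; rewrite gee0_abs // lee_fin.
have : (\int[P]_x `|(f x)%:E| = 0)%E.
  apply/le_anti/andP; split; last exact: integral_ge0.
  rewrite Eabs; move: Ef0 (integrable_fin_num measurableT If).
  by rewrite /expect; case: (\int[P]_x _)%E.
move/(ae_eq_integral_abs P measurableT mf).
by apply: filterS => x /(_ I) /= [->].
Qed.

End expectation.

Lemma normr_indicM_le1 (T : Type) (R : numDomainType) (A : set T) x (r : R) :
  0 <= r <= 1 -> `|\1_A x * r| <= 1.
Proof.
move=> /andP[r0 r1]; rewrite indicE.
by case: (x \in A); rewrite ?mul1r ?mul0r ?normr0 ?ger0_norm.
Qed.

Section selection.
Context {d} {Xs : measurableType d} {R : realType} {I : finType}.
Implicit Types (A : set Xs) (C : Xs -> I).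

Lemma natr_bool_indicE (D : Xs -> bool) x : (D x)%:R = \1_(D @^-1` [set true]) x :> R.
Proof.
rewrite indicE; have [Dx|/negP Dx] := boolP (D x); first by rewrite mem_set.
by rewrite memNset.
Qed.

Lemma indic_fiber_sum A C (F : I -> R) x :
  \1_A x * F (C x) = \sum_i \1_(A `&` C @^-1` [set i]) x * F i.
Proof.
rewrite (bigD1 (C x)) //= big1 ?addr0 => [|i /negbTE Cxi].
  by rewrite !indicE in_setI [x \in C @^-1` _]mem_set ?andbT.
by rewrite indicE memNset ?mul0r //= => -[_ /eqP]; rewrite eq_sym Cxi.
Qed.

Lemma measurable_fun_policy (D : Xs -> bool) C (f : I -> Xs -> R) :
  policy D C -> (forall i, measurable_fun setT (f i)) ->
  measurable_fun setT (fun x => f (C x) x * (D x)%:R).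
Proof.
move=> [mD mC] mf; rewrite (_ : (fun x => _) =
    fun x => \sum_i \1_(D @^-1` [set true] `&` C @^-1` [set i]) x * f i x).
  apply: measurable_sum => i; apply: measurable_funM => //.
  exact/measurable_indic/measurableI.
by apply/funext => x; rewrite mulrC natr_bool_indicE (indic_fiber_sum _ _ (f^~ x)).
Qed.

Lemma measurable_Tmax (p : I -> Xs -> R) :
  (forall i, measurable_fun setT (p i)) -> measurable_fun setT (Tmax p).
Proof.
move=> mp; rewrite /Tmax; elim: (index_enum I) => [|i s IHs].
  by under eq_fun do rewrite big_nil; exact: measurable_cst.
by under eq_fun do rewrite big_cons; exact: measurable_maxr.
Qed.

Lemma Tmax_argmax (p : I -> Xs -> R) c x :
  (forall i, 0 <= p i x) -> (forall i, p i x <= p c x) -> Tmax p x = p c x.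
Proof.
move=> p0 pc; rewrite /Tmax; apply/le_anti/andP; split.
  by elim/big_ind: _ => // a b ac bc; rewrite ge_max ac bc.
by rewrite (bigD1 c) //= le_max lexx.
Qed.

End selection.

Lemma measurable_preimage {d d'} {T : measurableType d} {U : measurableType d'}
  (f : T -> U) (B : set U) :
  measurable_fun setT f -> measurable B -> measurable (f @^-1` B).
Proof. by move=> mf mB; rewrite -[f @^-1` B]setTI; exact: mf. Qed.

Section conditional_probability.
Context {d1 d2 d3 : measure_display} {Om : measurableType d1}
  {Xs : measurableType d2} {Ys : measurableType d3} {R : realType}.
Variables (P : probability Om R) (X : Om -> Xs) (Y : Om -> Ys).
Hypotheses (mX : measurable_fun setT X) (mY : measurable_fun setT Y).

Lemma integrable_bounded_comp (g : Xs -> R) M : measurable_fun setT g ->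
  (forall x, `|g x| <= M) -> P.-integrable setT (EFin \o (fun om => g (X om))).
Proof. by move=> mg gM; apply: integrable_bounded => //; exact: measurableT_comp. Qed.

Lemma integrable_indic_pair (A : set Xs) (B : set Ys) :
  measurable A -> measurable B ->
  P.-integrable setT (EFin \o (fun om => \1_A (X om) * \1_B (Y om))).
Proof.
move=> mA mB; apply: (integrable_bounded P _ 1).
  by apply: measurable_funM; apply: measurableT_comp => //; exact: measurable_indic.
by move=> om; rewrite normr_indicM_le1 // !indicE; case: (_ \in _); rewrite ?ler01 ?lexx.
Qed.

Lemma expect_cond_prob (B : set Ys) (q : Xs -> R) (A : set Xs) :
  measurable B -> is_cond_prob P X Y B q -> measurable A ->
  expect P (fun om => \1_A (X om) * \1_B (Y om)) =
  expect P (fun om => \1_A (X om) * q (X om)).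
Proof.
move=> mB [_ _ hq] mA; rewrite /expect; congr fine.
have indicXY om : \1_A (X om) * \1_B (Y om) = \1_(X @^-1` A `&` Y @^-1` B) om :> R.
  by rewrite indicI.
under eq_integral do rewrite indicXY.
rewrite integral_indic //; last by apply: measurableI; apply: measurable_preimage.
rewrite setIT; transitivity (\int[P]_(om in X @^-1` A) (q (X om))%:E)%E.
  exact: hq.
rewrite integral_mkcond; apply: eq_integral => om _.
rewrite patchE indicE -[om \in X @^-1` A]/(X om \in A).
by case: (X om \in A); rewrite ?mul1r ?mul0r.
Qed.

Lemma expect_cond_probC (B : set Ys) (q : Xs -> R) (A : set Xs) :
  measurable B -> is_cond_prob P X Y B q -> measurable A ->
  expect P (fun om => \1_A (X om) * \1_(~` B) (Y om)) =
  expect P (fun om => \1_A (X om) * (1 - q (X om))).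
Proof.
move=> mB hq mA; have [mq q01 _] := hq.
have IA : P.-integrable setT (EFin \o (fun om => \1_A (X om))).
  apply: (integrable_bounded_comp (\1_A) 1); first exact: measurable_indic.
  by move=> x; rewrite -[\1_A x]mulr1 normr_indicM_le1 // ler01 lexx.
have IAq : P.-integrable setT (EFin \o (fun om => \1_A (X om) * q (X om))).
  apply: (integrable_bounded_comp (fun x => \1_A x * q x) 1).
    by apply: measurable_funM => //; exact: measurable_indic.
  by move=> x; exact: normr_indicM_le1.
have indicCE om : \1_A (X om) * \1_(~` B) (Y om) =
    \1_A (X om) - \1_A (X om) * \1_B (Y om) :> R.
  rewrite indicC /= [\1_B _]indicE.
  by case: (Y om \in B); rewrite /= ?mulr0n ?mulr1n ?mulr0 ?mulr1 ?subr0 ?subrr.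
under eq_fun do rewrite indicCE; under [in RHS]eq_fun do rewrite mulrBr mulr1.
rewrite !expectB //; last exact: integrable_indic_pair.
by rewrite (expect_cond_prob _ _ _ mB hq mA).
Qed.

End conditional_probability.

Section threshold_reals.
Variable R : realFieldType.
Implicit Types a t q wq wt : R.

Lemma threshold_cost_le a t q (b : bool) : q <= t ->
  (1 - t - a) * (1 - a <= t)%R%:R <= (1 - q - a) * b%:R.
Proof.
by move=> qt; case: b; case: (leP (1 - a) t) => /= ?; rewrite ?mulr1 ?mulr0; lra.
Qed.

Lemma threshold_reward_le a t q wq wt (b : bool) :
  0 <= q -> q <= t -> t <= 1 - a -> (q = t -> wq <= wt) -> 0 <= wt ->
  (1 - q - a) * b%:R <= 0 -> wq * q * b%:R <= wt * t * (1 - a <= t)%R%:R.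
Proof.
move=> q0 qt ta wqt wt0; case: b => /=; rewrite ?mulr1 ?mulr0 => qa.
  have tq : t = q by lra.
  rewrite tq (_ : 1 - a <= q) ?mulr1; last by lra.
  by apply: ler_wpM2r => //; exact: wqt.
by case: (1 - a <= t); rewrite ?mulr1 ?mulr0 //; apply: mulr_ge0 => //; lra.
Qed.

End threshold_reals.

Definition threshold_decision {d} {Xs : measurableType d} {R : realType} {I : finType}
  (alpha : R) (p : I -> Xs -> R) (x : Xs) : bool := 1 - alpha <= Tmax p x.

Section policy.
Context {d1 d2 d3 : measure_display} {Om : measurableType d1}
  {Xs : measurableType d2} {Ys : measurableType d3} {R : realType}.
Variables (P : probability Om R) (X : Om -> Xs) (Y : Om -> Ys)
  (I : finType) (S : I -> set Ys) (p : I -> Xs -> R) (alpha : R).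
Hypotheses (mX : measurable_fun setT X) (mY : measurable_fun setT Y)
  (mS : forall i, measurable (S i)) (hp : forall i, is_cond_prob P X Y (S i) (p i))
  (alpha_ge0 : 0 <= alpha).

Let measurable_p i : measurable_fun setT (p i). Proof. by case: (hp i). Qed.

Let p01 i x : 0 <= p i x <= 1. Proof. by case: (hp i). Qed.

Lemma integrable_policy (D : Xs -> bool) (C : Xs -> I) (f : I -> Xs -> R) M :
  policy D C -> (forall i, measurable_fun setT (f i)) -> (forall i x, `|f i x| <= M) ->
  P.-integrable setT (EFin \o (fun om => f (C (X om)) (X om) * (D (X om))%:R)).
Proof.
move=> pol mf fM.
apply: (integrable_bounded_comp P X mX (fun x => f (C x) x * (D x)%:R) M).
  exact: measurable_fun_policy.
move=> x; case: (D x); rewrite ?mulr1 ?mulr0 ?normr0 //.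
exact: le_trans (normr_ge0 _) (fM (C x) x).
Qed.

Lemma expect_miscoverage (D : Xs -> bool) (C : Xs -> I) : policy D C ->
  expect P (fun om => \1_(~` S (C (X om))) (Y om) * (D (X om))%:R) =
  expect P (fun om => (1 - p (C (X om)) (X om)) * (D (X om))%:R).
Proof.
move=> [mD mC]; set A := D @^-1` [set true].
have fiberE (F : I -> R) x :
    F (C x) * (D x)%:R = \sum_i \1_(A `&` C @^-1` [set i]) x * F i.
  by rewrite mulrC natr_bool_indicE; exact: indic_fiber_sum.
under eq_fun do rewrite (fiberE (fun i => \1_(~` S i) (Y _))).
under [in RHS]eq_fun do rewrite (fiberE (fun i => 1 - p i (X _))).
have mAi i : measurable (A `&` C @^-1` [set i]) by exact: measurableI.
rewrite !expect_sum => [|i|i].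
- by apply: eq_bigr => i _; apply: expect_cond_probC.
- apply: (integrable_bounded_comp P X mX (fun x => \1_(_) x * (1 - p i x)) 1).
    apply: measurable_funM; first exact: measurable_indic.
    by apply: measurable_funB => //; exact: measurable_cst.
  move=> x; apply: normr_indicM_le1.
  by have /andP[pi0 pi1] := p01 i x; rewrite subr_ge0 pi1 lerBlDr lerDl.
- by apply: integrable_indic_pair => //; exact: measurableC.
Qed.

Lemma integrable_natr_policy (D : Xs -> bool) : measurable (D @^-1` [set true]) ->
  P.-integrable setT (EFin \o (fun om => (D (X om))%:R)).
Proof.
move=> mD; apply: (integrable_bounded_comp P X mX (fun x => (D x)%:R) 1).
  by under eq_fun do rewrite natr_bool_indicE; exact: measurable_indic.
by move=> x; case: (D x); rewrite ?normr1 ?normr0.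
Qed.

Lemma integrable_Gobj (D : Xs -> bool) (C : Xs -> I) : policy D C ->
  P.-integrable setT
    (EFin \o (fun om => (1 - p (C (X om)) (X om) - alpha) * (D (X om))%:R)).
Proof.
move=> pol; apply: (integrable_policy _ _ (fun i x => 1 - p i x - alpha) (1 + alpha) pol).
  by move=> i; apply: measurable_funB => //; apply: measurable_funB => //;
    exact: measurable_cst.
move=> i x; have /andP[pi0 pi1] := p01 i x; have a0 := alpha_ge0.
by rewrite ler_norml; apply/andP; split; lra.
Qed.

Lemma integrable_Pi (w : I -> R) M (D : Xs -> bool) (C : Xs -> I) :
  (forall i, `|w i| <= M) -> policy D C ->
  P.-integrable setT
    (EFin \o (fun om => w (C (X om)) * p (C (X om)) (X om) * (D (X om))%:R)).
Proof.
move=> wM pol; apply: (integrable_policy _ _ (fun i x => w i * p i x) M pol).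
  by move=> i; apply: measurable_funM => //; exact: measurable_cst.
move=> i x; have /andP[pi0 pi1] := p01 i x.
by rewrite normrM (ger0_norm pi0) -[M]mulr1 ler_pM.
Qed.

Lemma mFCR_le_Gobj_le0 (D : Xs -> bool) (C : Xs -> I) :
  policy D C -> mFCR P X Y S D C <= alpha <-> Gobj P X alpha p D C <= 0.
Proof.
move=> pol; have [mD _] := pol; have ID := integrable_natr_policy _ mD.
set E1p := expect P (fun om => (1 - p (C (X om)) (X om)) * (D (X om))%:R).
set ED := expect P (fun om => (D (X om))%:R).
have GobjE : Gobj P X alpha p D C = E1p - alpha * ED.
  rewrite -expectZl // -expectB //.
  - by congr expect; apply/funext => om; rewrite mulrBl.
  - apply: (integrable_policy _ _ (fun i x => 1 - p i x) 1 pol).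
      by move=> i; apply: measurable_funB => //; exact: measurable_cst.
    move=> i x; have /andP[pi0 pi1] := p01 i x.
    by rewrite ler_norml; apply/andP; split; lra.
  - apply: (integrable_policy _ _ (fun _ _ => alpha) alpha pol) => [i|i x].
      exact: measurable_cst.
    by rewrite ger0_norm.
rewrite /mFCR /= expect_miscoverage // -/E1p -/ED.
case: ifPn => [/eqP ED0|EDn0].
  split=> // _; rewrite /Gobj -[0]ED0; apply: le_expect => // [|om].
    exact: integrable_Gobj.
  have /andP[q0 q1] := p01 (C (X om)) (X om); have a0 := alpha_ge0.
  by case: (D (X om)); rewrite /= ?mulr1 ?mulr0 //; lra.
have ED_gt0 : 0 < ED by rewrite lt_def EDn0 expect_ge0.
by rewrite ler_pdivrMr // GobjE subr_le0 mulrC.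
Qed.

Variables (w : I -> R) (Cmax : Xs -> I).
Hypotheses (w_ge0 : forall i, 0 <= w i)
  (Cmax_max : forall x i, p i x <= p (Cmax x) x)
  (Cmax_tie : forall x i, p i x = p (Cmax x) x -> w i <= w (Cmax x))
  (mCmax : forall i, measurable (Cmax @^-1` [set i])).

Local Notation DG := (threshold_decision alpha p).

Lemma Tmax_Cmax x : Tmax p x = p (Cmax x) x.
Proof. by apply: Tmax_argmax (Cmax_max x) => i; case/andP: (p01 i x). Qed.

Lemma policy_threshold : policy DG Cmax.
Proof.
split=> //; apply: measurable_preimage => //.
by apply: measurable_fun_ler; [exact: measurable_cst | exact: measurable_Tmax].
Qed.

Lemma Gobj_threshold_le (D : Xs -> bool) (C : Xs -> I) :
  policy D C -> Gobj P X alpha p DG Cmax <= Gobj P X alpha p D C.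
Proof.
move=> pol; apply: le_expect => [||om].
- exact: integrable_Gobj policy_threshold.
- exact: integrable_Gobj pol.
- by rewrite /threshold_decision Tmax_Cmax; exact: threshold_cost_le.
Qed.

Lemma mFCR_threshold_le : mFCR P X Y S DG Cmax <= alpha.
Proof.
apply/(mFCR_le_Gobj_le0 _ _ policy_threshold).
have reject_all : policy (fun=> false) Cmax.
  by split=> //; apply: measurable_preimage => //; exact: measurable_cst.
apply: le_trans (Gobj_threshold_le _ _ reject_all) _.
by rewrite /Gobj /expect; under eq_integral do rewrite mulr0; rewrite integral0.
Qed.

Lemma Pi_le_threshold (D : Xs -> bool) (C : Xs -> I) :
  P (X @^-1` [set x | 1 - alpha < Tmax p x]) = 0%E ->
  policy D C -> mFCR P X Y S D C <= alpha ->
  Pi P X w p D C <= Pi P X w p DG Cmax.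
Proof.
move=> null pol feasible.
have Tmax_le : {ae P, forall om, Tmax p (X om) <= 1 - alpha}.
  exists (X @^-1` [set x | 1 - alpha < Tmax p x]); split => //.
    apply: measurable_preimage => //; apply: measurable_preimage => //.
    by apply: measurable_fun_ltr; [exact: measurable_cst | exact: measurable_Tmax].
  by move=> om /negP; rewrite -ltNge.
pose cost om := (1 - p (C (X om)) (X om) - alpha) * (D (X om))%:R.
have cost_ge0 : {ae P, forall om, 0 <= cost om}.
  apply: filterS Tmax_le => om; rewrite /cost Tmax_Cmax.
  have := Cmax_max (X om) (C (X om)).
  by case: (D (X om)); rewrite /= ?mulr1 ?mulr0 //; lra.
have cost_le0 : {ae P, forall om, cost om <= 0}.
  apply: expect_le0_ae cost_ge0 _; first exact: integrable_Gobj pol.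
  exact/(mFCR_le_Gobj_le0 _ _ pol).
have w_bounded i : `|w i| <= \sum_j w j.
  by rewrite ger0_norm // (bigD1 i) //= lerDl sumr_ge0.
apply: le_expect_ae; [exact: integrable_Pi pol | exact: integrable_Pi policy_threshold |].
apply: filterS2 Tmax_le cost_le0 => om.
rewrite /threshold_decision Tmax_Cmax => Tle cost0.
apply: threshold_reward_le => //; first by case/andP: (p01 (C (X om)) (X om)).
exact: Cmax_tie.
Qed.

End policy.

Theorem proposition11 (d1 d2 d3 : measure_display) (Om : measurableType d1)
  (Xs : measurableType d2) (Ys : measurableType d3) (R : realType)
  (P : probability Om R) (X : Om -> Xs) (Y : Om -> Ys)
  (I : finType) (S : I -> set Ys) (w : I -> R) (B alpha : R)
  (p : I -> Xs -> R) (Cmax : Xs -> I) :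
  measurable_fun setT X -> measurable_fun setT Y ->
  (forall i, measurable (S i)) -> injective S ->
  0 < alpha < 1 -> (forall i, 0 < w i < B) ->
  (forall i, is_cond_prob P X Y (S i) (p i)) ->
  (* Cmax(x) is an argmax of p_C(x), ties broken in favour of larger weight *)
  (forall x i, p i x <= p (Cmax x) x) ->
  (forall x i, p i x = p (Cmax x) x -> w i <= w (Cmax x)) ->
  (forall i, measurable (Cmax @^-1` [set i])) ->
  let DG := fun x => (1 - alpha <= Tmax p x) in
  [/\ mFCR P X Y S DG Cmax <= alpha,
      (forall D C, policy D C -> Gobj P X alpha p DG Cmax <= Gobj P X alpha p D C) &
      (P (X @^-1` [set x | 1 - alpha < Tmax p x]) = 0%E ->
       forall D C, policy D C -> mFCR P X Y S D C <= alpha ->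
         Pi P X w p D C <= Pi P X w p DG Cmax)].
Proof.
move=> mX mY mS _ /andP[alpha_gt0 _] hw hp Cmax_max Cmax_tie mCmax DG.
have alpha_ge0 := ltW alpha_gt0.
have w_ge0 i : 0 <= w i by case/andP: (hw i) => /ltW.
split.
- by apply: mFCR_threshold_le.
- by move=> D C; apply: Gobj_threshold_le.
- by move=> null D C; apply: Pi_le_threshold.
Qed.
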